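(* Let $\Delta\vdash t$ be a closed nominal term-in-context and $\hat t=\mathcal{T}(\Delta,t)$. If $\pi_1\cdot X$ and $\pi_2\cdot X$ are two occurrences of the same variable $X$ in $t$ and $X(\overline{xs_1})$, $X(\overline{xs_2})$ are their respective translations in $\hat t$, then $\pi_1^{-1}\cdot\overline{xs_1}=\pi_2^{-1}\cdot\overline{xs_2}$ (as lists, with permutations applied elementwise).
   Context: Nominal terms: $s,t ::= a \mid \pi\cdot X \mid [a]s \mid f\,s \mid (s_1,\ldots,s_n)$ over atoms, variables, function symbols and finite-support permutations $\pi$ of atoms. A freshness context $\Delta$ is a set of constraints $a\#X$. $\Delta\vdash t$ is closed if: (1) every atom occurrence $a$ in $t$ lies under an abstraction $[a]$; (2) if $\pi\cdot X$ is in the scope of an abstraction of $\pi(a)$ then every occurrence $\pi'\cdot X$ of $X$ in $t$ is in the scope of an abstraction of $\pi'(a)$, or $a\#X\in\Delta$; (3) for two occurrences $\pi_1\cdot X,\pi_2\cdot X$ and $a$ with $\pi_1(a)\neq\pi_2(a)$, if $a$ is not abstracted in one of the occurrences then $a\#X\in\Delta$. Translation: $\Lambda_t(X)$ is the set of atoms $a$ such that some occurrence of $X$ in $t$ is in the scope of $[a]$. With a fixed total order on atoms, $\mathcal{T}(\Delta,t)$ is the CRS meta-term obtained from $t$ by replacing each occurrence $\pi\cdot X$ by $X(\overline{xs})$ with $\overline{xs}=\pi\cdot xs$, where $xs$ is the ascending list of $\{\pi^{-1}(a)\mid a\in\Lambda_t(X)\}\setminus\{a\mid a\#X\in\Delta\}$;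 other constructs are kept unchanged. *)

From mathcomp Require Import all_boot.
Set Implicit Arguments. Unset Strict Implicit. Unset Printing Implicit Defensive.

(* Atoms, variables and function symbols are named by natural numbers.
   The fixed total order on atoms is the usual order <= on nat. *)
Definition atom := nat.
Definition var := nat.
Definition fsym := nat.

(* Finite-support permutations of atoms, represented as finite lists of swaps:
   [:: (a1,b1); ...; (an,bn)] denotes (a1 b1) o ... o (an bn).
   Every finite-support permutation is such a product. *)
Definition perm := seq (atom * atom).

Definition swap (a b c : atom) : atom :=
  if c == a then b else if c == b then a else c.

Definition perm_act (p : perm) (c : atom) : atom :=
  foldr (fun ab c => swap ab.1 ab.2 c) c p.

Definition perm_inv (p : perm) : perm := rev p.

(* Nominal terms: a | pi.X | [a]s | f s | (s1,...,sn) *)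
Inductive term : Type :=
| Atom of atom
| Susp of perm & var
| Abs of atom & term
| App of fsym & term
| Tup of seq term.

(* freshness context: a finite set of constraints a # X *)
Definition fctx := seq (atom * var).

(* Variable occurrences of a term, in left-to-right order, each recorded as
   (list of atoms abstracted above the occurrence, permutation, variable). *)
Fixpoint occs_sc (s : seq atom) (t : term) : seq (seq atom * perm * var) :=
  match t with
  | Atom _ => [::]
  | Susp p X => [:: (s, p, X)]
  | Abs a u => occs_sc (a :: s) u
  | App _ u => occs_sc s u
  | Tup ts => flatten (map (occs_sc s) ts)
  end.
Definition occs (t : term) := occs_sc [::] t.

Fixpoint aoccs_sc (s : seq atom) (t : term) : seq (seq atom * atom) :=
  match t with
  | Atom a => [:: (s, a)]
  | Susp _ _ => [::]
  | Abs a u => aoccs_sc (a :: s) u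
  | App _ u => aoccs_sc s u
  | Tup ts => flatten (map (aoccs_sc s) ts)
  end.
Definition aoccs (t : term) := aoccs_sc [::] t.

Definition nclosed (D : fctx) (t : term) : Prop :=
  (forall s a, (s, a) \in aoccs t -> a \in s) /\
  (forall s p X a, (s, p, X) \in occs t -> perm_act p a \in s ->
     forall s' p', (s', p', X) \in occs t ->
       perm_act p' a \in s' \/ (a, X) \in D) /\
  (forall s1 p1 s2 p2 X a, (s1, p1, X) \in occs t -> (s2, p2, X) \in occs t ->
     perm_act p1 a != perm_act p2 a ->
     (perm_act p1 a \notin s1 \/ perm_act p2 a \notin s2) ->
     (a, X) \in D).

Definition Lambda (t : term) (X : var) : seq atom :=
  flatten [seq o.1.1 | o <- occs t & o.2 == X].

(* CRS meta-terms *)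
Inductive mterm : Type :=
| MAtom of atom
| MVar of var & seq atom
| MAbs of atom & mterm
| MApp of fsym & mterm
| MTup of seq mterm.

Definition xs_of (D : fctx) (t : term) (p : perm) (X : var) : seq atom :=
  sort leq (undup [seq b <- map (perm_act (perm_inv p)) (Lambda t X)
                   | (b, X) \notin D]).

Fixpoint translate_aux (D : fctx) (t0 : term) (t : term) : mterm :=
  match t with
  | Atom a => MAtom a
  | Susp p X => MVar X (map (perm_act p) (xs_of D t0 p X))
  | Abs a u => MAbs a (translate_aux D t0 u)
  | App f u => MApp f (translate_aux D t0 u)
  | Tup ts => MTup (map (translate_aux D t0) ts)
  end.

Definition translate (D : fctx) (t : term) : mterm := translate_aux D t t.

(* meta-variable occurrences of a meta-term, in left-to-right order
   (the same traversal order as [occs]). *)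
Fixpoint mvoccs (m : mterm) : seq (var * seq atom) :=
  match m with
  | MAtom _ => [::]
  | MVar X xs => [:: (X, xs)]
  | MAbs _ u => mvoccs u
  | MApp _ u => mvoccs u
  | MTup ms => flatten (map mvoccs ms)
  end.

From mathcomp Require Import all_boot.
From Stdlib Require List.

(* The list [xs] of an occurrence [pi.X] is [pi] applied to the ascending list
   of the atoms [b] with [b # X] not in [Delta] and [pi(b)] in [Lambda_t(X)].
   Closedness makes this last condition independent of the occurrence: if
   [pi1(b)] is abstracted above some occurrence [pi3.X], then condition (3)
   forces [pi3(b)] to be abstracted there as well, and condition (2) then
   propagates it to every other occurrence.  Hence [pi^-1 . xs] is the same
   list for all occurrences of [X]. *)

Lemma swapK a b : involutive (swap a b).
Proof.
move=> c; rewrite /swap.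
case: (eqVneq c a) => [->|ca]; first by rewrite eqxx; case: eqVneq.
case: (eqVneq c b) => [->|cb]; first by rewrite eqxx.
by rewrite (negbTE ca) (negbTE cb).
Qed.

Lemma perm_actK p : cancel (perm_act p) (perm_act (perm_inv p)).
Proof.
elim: p => [|[a b] p IH] c //=.
by rewrite /perm_inv rev_cons /perm_act foldr_rcons /= swapK; apply: IH.
Qed.

Lemma perm_actVK p : cancel (perm_act (perm_inv p)) (perm_act p).
Proof. by have := perm_actK (perm_inv p); rewrite /perm_inv revK. Qed.

Lemma term_ind_Forall (P : term -> Prop) :
  (forall a, P (Atom a)) -> (forall p X, P (Susp p X)) ->
  (forall a u, P u -> P (Abs a u)) -> (forall f u, P u -> P (App f u)) ->
  (forall ts, List.Forall P ts -> P (Tup ts)) ->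
  forall t, P t.
Proof.
move=> HA HS HB HF HT; fix IH 1 => -[a|p X|a u|f u|ts].
- exact: HA.
- exact: HS.
- exact: HB.
- exact: HF.
- apply: HT; elim: ts => [|u ts IHts].
  + exact: List.Forall_nil.
  + exact: List.Forall_cons (IH u) IHts.
Qed.

Definition translate_occ (D : fctx) (t0 : term) (o : seq atom * perm * var) :=
  (o.2, map (perm_act o.1.2) (xs_of D t0 o.1.2 o.2)).

Lemma mvoccs_translate_aux (D : fctx) (t0 t : term) (s : seq atom) :
  mvoccs (translate_aux D t0 t) = map (translate_occ D t0) (occs_sc s t).
Proof.
elim/term_ind_Forall: t s => [a|p X|a u IH|f u IH|ts IH] s //=.
rewrite map_flatten -map_comp; congr flatten.
by elim: IH => [|u us IHu _ IHus] //=; rewrite (IHu s) IHus.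
Qed.

Lemma LambdaP (t : term) (X : var) (a : atom) :
  reflect (exists s p, (s, p, X) \in occs t /\ a \in s) (a \in Lambda t X).
Proof.
apply: (iffP flattenP) => [[s /mapP [[[s' p] Y]]] | [s [p [oin ain]]]].
- by rewrite mem_filter /= => /andP [/eqP -> oin] -> ain; exists s', p.
- by exists s => //; apply/mapP; exists (s, p, X); rewrite ?mem_filter ?eqxx.
Qed.

Lemma mem_xs_of (D : fctx) (t : term) (p : perm) (X : var) (b : atom) :
  (b \in xs_of D t p X) = ((b, X) \notin D) && (perm_act p b \in Lambda t X).
Proof.
rewrite mem_sort mem_undup mem_filter -{2}(perm_actK p b) mem_map //.
exact: can_inj (perm_actVK p).
Qed.

Lemma sort_undup_eq_mem (s1 s2 : seq nat) :
  s1 =i s2 -> sort leq (undup s1) = sort leq (undup s2).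
Proof.
move=> eq_s; apply/perm_sortP; [exact: leq_total | exact: leq_trans | exact: anti_leq |].
by apply: uniq_perm; rewrite ?undup_uniq // => b; rewrite !mem_undup.
Qed.

Section ClosedTerm.

Variables (D : fctx) (t : term).
Hypothesis t_closed : nclosed D t.

Lemma closed_abstracted_everywhere (X : var) (s1 s2 : seq atom) (p1 p2 : perm) b :
  (s1, p1, X) \in occs t -> (s2, p2, X) \in occs t -> (b, X) \notin D ->
  perm_act p1 b \in Lambda t X -> perm_act p2 b \in s2.
Proof.
case: t_closed => _ [propagate differ] o1 o2 bD /LambdaP [s3 [p3 [o3 in3]]].
have in3' : perm_act p3 b \in s3.
  case: (eqVneq (perm_act p1 b) (perm_act p3 b)) => [<- //|ne].
  apply/negPn/negP => out3.
  by rewrite (differ _ _ _ _ _ _ o1 o3 ne (or_intror out3)) in bD.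
by case: (propagate _ _ _ _ o3 in3' _ _ o2) => // bX; rewrite bX in bD.
Qed.

Lemma closed_xs_of_eq (X : var) (s1 s2 : seq atom) (p1 p2 : perm) :
  (s1, p1, X) \in occs t -> (s2, p2, X) \in occs t ->
  xs_of D t p1 X = xs_of D t p2 X.
Proof.
have sub r1 q1 r2 q2 : (r1, q1, X) \in occs t -> (r2, q2, X) \in occs t ->
    {subset xs_of D t q1 X <= xs_of D t q2 X}.
  move=> o1 o2 b; rewrite !mem_xs_of => /andP [bD inL]; rewrite bD /=.
  apply/LambdaP; exists r2, q2; split=> //.
  exact: closed_abstracted_everywhere o1 o2 bD inL.
move=> o1 o2; apply: sort_undup_eq_mem => b.
have := sub _ _ _ _ o1 o2 b; have := sub _ _ _ _ o2 o1 b.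
by rewrite !mem_sort !mem_undup => sub21 sub12; apply/idP/idP.
Qed.

End ClosedTerm.

Theorem mainTheorem7 (Delta : fctx) (t : term) (i j : nat) (X : var)
    (s1 s2 : seq atom) (p1 p2 : perm) (xs1 xs2 : seq atom) :
  nclosed Delta t ->
  onth (occs t) i = Some (s1, p1, X) ->
  onth (occs t) j = Some (s2, p2, X) ->
  onth (mvoccs (translate Delta t)) i = Some (X, xs1) ->
  onth (mvoccs (translate Delta t)) j = Some (X, xs2) ->
  map (perm_act (perm_inv p1)) xs1 = map (perm_act (perm_inv p2)) xs2.
Proof.
move=> t_closed e1 e2.
rewrite /translate (mvoccs_translate_aux Delta t t [::]) !onth_map -/(occs t) e1 e2.
move=> [<-] [<-]; rewrite -!map_comp !(eq_map (perm_actK _)) !map_id.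
by apply: (closed_xs_of_eq _ _ t_closed X s1 s2); apply/onthP; [exists i | exists j].
Qed.
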